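(* Let $S$ be a subspace of $\mathbb{R}^n$ and $\mathcal{M}_S=\{A\in\mathbb{R}^{n\times n}: A=A^\intercal,\ \mathrm{range}(A)=S,\ A\succeq0\}$. Then $A\mapsto\log\mathrm{Det}(A)$ is concave on any convex subset of $\mathcal{M}_S$.
   Context: For $A\in\mathbb{R}^{n\times n}$ the pseudo-determinant is $\mathrm{Det}(A)=\lim_{\epsilon\to0}\det(A+\epsilon I)/\epsilon^{n-\mathrm{rank}(A)}$; $\mathrm{range}(A)$ is the column space of $A$. *)

From HB Require Import structures.
From mathcomp Require Import all_boot all_order all_algebra.
From mathcomp Require Import all_classical all_reals all_analysis.
Set Implicit Arguments. Unset Strict Implicit. Unset Printing Implicit Defensive.
Import Order.TTheory GRing.Theory Num.Theory.
Import numFieldNormedType.Exports.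
Local Open Scope classical_set_scope.
Local Open Scope ring_scope.

Definition pdet (R : realType) (n : nat) (A : 'M[R]_n) : R :=
  lim ((fun eps : R => \det (A + eps%:M) / eps ^+ (n - \rank A)) @ 0^').

(* Positive semidefinite (for a matrix we also separately require symmetry). *)
Definition psd (R : realType) (n : nat) (A : 'M[R]_n) : Prop :=
  forall x : 'cV[R]_n, 0 <= (x^T *m A *m x) 0 0.

(* range(A) = column space of A = row space of A^T (mxalgebra row spaces).
   A subspace S of R^n is represented by a matrix whose row space is S. *)
Definition range_eq (R : realType) (n : nat) (A S : 'M[R]_n) : Prop :=
  (A^T == S)%MS.

Definition MS (R : realType) (n : nat) (S : 'M[R]_n) : set 'M[R]_n :=
  [set A | A = A^T /\ range_eq A S /\ psd A].

Definition convex_mxset (R : realType) (n : nat) (C : set 'M[R]_n) : Prop :=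
  forall A B, C A -> C B -> forall t : R, 0 <= t <= 1 ->
    C (t *: A + (1 - t) *: B).

Definition concave_on (R : realType) (n : nat) (C : set 'M[R]_n)
  (f : 'M[R]_n -> R) : Prop :=
  forall A B, C A -> C B -> forall t : R, 0 <= t <= 1 ->
    t * f A + (1 - t) * f B <= f (t *: A + (1 - t) *: B).

From HB Require Import structures.
From mathcomp Require Import all_boot all_order all_algebra.
From mathcomp Require Import all_classical all_reals all_analysis.
From mathcomp Require Import ring lra.
Import Order.TTheory GRing.Theory Num.Theory.
Import numFieldNormedType.Exports.
Local Open Scope classical_set_scope.
Local Open Scope ring_scope.
Set Implicit Arguments. Unset Strict Implicit. Unset Printing Implicit Defensive.

(* On positive definite matrices, eliminating the first pivot gives
   det X = pivot X * det (schur X).  The pivot is linear in X, and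
   qform (schur X) x is the minimum of qform X over the first coordinate, so
   schur is superadditive in the Loewner order.  Hence the stronger claim
   "t ln det X + (1-t) ln det Y <= ln det Z whenever Z >= t X + (1-t) Y"
   survives an induction on the size, using concavity of ln for the pivots.
   For the pseudo-determinant, fix a row-free basis B (r x n) of S.  Each A in
   M_S is B^T M B with M positive definite and linear in A, and Sylvester's
   identity det (B^T M B + e) = e^(n-r) det (M B B^T + e) gives
   Det A = det M * det (B B^T), so ln Det A = ln det M + const. *)

Section QuadraticForm.
Variable R : realFieldType.

Definition qform n (X : 'M[R]_n) (x : 'cV[R]_n) : R := (x^T *m X *m x) 0 0.
Definition posdef n (X : 'M[R]_n) : Prop := forall x, x != 0 -> 0 < qform X x.

Lemma trmx11E (M : 'M[R]_1) : M^T 0 0 = M 0 0.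
Proof. by rewrite mxE. Qed.

Lemma qformD n (X Y : 'M[R]_n) x : qform (X + Y) x = qform X x + qform Y x.
Proof. by rewrite /qform mulmxDr mulmxDl mxE. Qed.

Lemma qformZ n (X : 'M[R]_n) a x : qform (a *: X) x = a * qform X x.
Proof. by rewrite /qform -scalemxAr -scalemxAl mxE. Qed.

Lemma qformB n (X Y : 'M[R]_n) x : qform (X - Y) x = qform X x - qform Y x.
Proof. by rewrite qformD -scaleN1r qformZ mulN1r. Qed.

Lemma qform0 n (X : 'M[R]_n) : qform X 0 = 0.
Proof. by rewrite /qform mulmx0 mxE. Qed.

Lemma qformZv n (X : 'M[R]_n) a x : qform X (a *: x) = a ^+ 2 * qform X x.
Proof.
by rewrite /qform linearZ /= [(a *: x)^T]linearZ /= -!scalemxAl scalerA mxE expr2.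
Qed.

Lemma qformDv n (X : 'M[R]_n) x y : X^T = X ->
  qform X (x + y) = qform X x + 2 * (y^T *m (X *m x)) 0 0 + qform X y.
Proof.
move=> sX; have cross : (x^T *m X *m y) 0 0 = (y^T *m (X *m x)) 0 0.
  by rewrite -trmx11E !trmx_mul trmxK sX mulmxA.
rewrite /qform [(x + y)^T]linearD /= !mulmxDl !mulmxDr.
by rewrite ![(_ + _ : 'M[R]_1) 0 0]mxE cross !mulmxA; ring.
Qed.

Lemma trmx_mul_self_ge0 n (v : 'cV[R]_n) : 0 <= (v^T *m v) 0 0.
Proof. by rewrite mxE; apply: sumr_ge0 => i _; rewrite mxE -expr2 sqr_ge0. Qed.

Lemma trmx_mul_self_eq0 n (v : 'cV[R]_n) : ((v^T *m v) 0 0 == 0) = (v == 0).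
Proof.
apply/eqP/eqP => [|->]; last by rewrite mulmx0 mxE.
rewrite mxE => /eqP; rewrite psumr_eq0 => [/allP v0|i _]; last first.
  by rewrite mxE -expr2 sqr_ge0.
apply/matrixP => i j; rewrite ord1 mxE; apply/eqP.
by have /implyP := v0 i (mem_index_enum i); rewrite mxE -expr2 sqrf_eq0; apply.
Qed.

Lemma quadratic_ge0_lin_eq0 (c d : R) :
  (forall s, 0 <= s * c + s ^+ 2 * d) -> c = 0.
Proof.
move=> ge0; set k := `|d| + 1; have k0 : 0 < k by rewrite ltr_wpDl.
(* At s = - c / k the quadratic equals c ^+ 2 * (d - k) / k ^+ 2, and d < k. *)
have := mulr_ge0 (ge0 (- c / k)) (sqr_ge0 k).
have -> : (- c / k * c + (- c / k) ^+ 2 * d) * k ^+ 2 = c ^+ 2 * (d - k).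
  by field; rewrite gt_eqF.
have dk : d - k <= -1 by rewrite /k; have := ler_norm d; lra.
by move=> scaled_ge0; apply/eqP; rewrite -sqrf_eq0 eq_le sqr_ge0 andbT; nra.
Qed.

Lemma psd_qform_eq0 n (X : 'M[R]_n) x : X^T = X -> (forall y, 0 <= qform X y) ->
  qform X x = 0 -> X *m x = 0.
Proof.
move=> sX X_psd qx0; apply/eqP; rewrite -trmx_mul_self_eq0; set v := X *m x.
have : 2 * (v^T *m v) 0 0 = 0.
  apply: (@quadratic_ge0_lin_eq0 _ (qform X v)) => s.
  have := X_psd (x + s *: v); rewrite qformDv // qx0 qformZv add0r.
  by rewrite linearZ /= -scalemxAl mxE mulrCA.
by move/eqP; rewrite mulf_eq0 pnatr_eq0.
Qed.

Lemma psd_unitmx_posdef n (X : 'M[R]_n) : X^T = X ->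
  (forall y, 0 <= qform X y) -> X \in unitmx -> posdef X.
Proof.
move=> sX X_psd uX x x0; rewrite lt_def X_psd andbT.
apply: contra x0 => /eqP /(psd_qform_eq0 sX X_psd) Xx0.
by rewrite -(mulKmx uX x) Xx0 mulmx0.
Qed.

Section Schur.
Variable r : nat.
Implicit Types (X : 'M[R]_(1 + r)) (x : 'cV[R]_r).

Definition pivot X : R := ulsubmx X 0 0.
Definition schur X : 'M[R]_r :=
  drsubmx X - (pivot X)^-1 *: (dlsubmx X *m ursubmx X).

Lemma tr_schur X : X^T = X -> (schur X)^T = schur X.
Proof.
move=> sX; rewrite /schur linearB /= linearZ /= trmx_mul.
by rewrite trmx_ursub trmx_dlsub trmx_drsub sX.
Qed.

Lemma det_schur X : pivot X != 0 -> \det X = pivot X * \det (schur X).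
Proof.
move=> p0; pose L := block_mx 1%:M 0 (- (pivot X)^-1 *: dlsubmx X) 1%:M.
have LX : L *m X = block_mx (ulsubmx X) (ursubmx X) 0 (schur X).
  rewrite -[X in L *m X]submxK mulmx_block !mul1mx !mul0mx !addr0.
  congr block_mx; last by rewrite /schur -scaleNr -scalemxAl addrC.
  rewrite [ulsubmx X]mx11_scalar -/(pivot X) mul_mx_scalar scalerA mulrN.
  by rewrite mulfV // scaleN1r addNr.
have := det_mulmx L X; rewrite det_lblock !det1 mulr1 mul1r LX det_ublock.
by rewrite det_mx11 => <-.
Qed.

Lemma trmx_dlsub_mulE X x : X^T = X ->
  (x^T *m dlsubmx X) 0 0 = (ursubmx X *m x) 0 0.
Proof. by move=> sX; rewrite -trmx11E trmx_mul trmxK trmx_dlsub sX. Qed.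

Lemma qform_col_mx X s x : X^T = X ->
  qform X (col_mx s%:M x) =
  pivot X * s ^+ 2 + 2 * s * (ursubmx X *m x) 0 0 + qform (drsubmx X) x.
Proof.
move=> sX; rewrite /qform tr_col_mx tr_scalar_mx -[X in _ *m X *m _]submxK.
rewrite mul_row_block mul_row_col !mulmxDl !mul_scalar_mx -!scalemxAl.
rewrite !mul_mx_scalar ![(_ + _ : 'M[R]_1) 0 0]mxE ![(_ *: _ : 'M[R]_1) 0 0]mxE.
by rewrite trmx_dlsub_mulE // -/(pivot X); ring.
Qed.

Lemma qform_pivot X : X^T = X -> qform X (col_mx 1%:M 0) = pivot X.
Proof. by move=> sX; rewrite qform_col_mx // mulmx0 mxE qform0; ring. Qed.

Lemma qform_schur X x : X^T = X ->
  qform (schur X) x =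
  qform (drsubmx X) x - (pivot X)^-1 * (ursubmx X *m x) 0 0 ^+ 2.
Proof.
move=> sX; rewrite /schur qformB qformZ; congr (_ - _ * _).
by rewrite /qform mulmxA -mulmxA mxE big_ord1 trmx_dlsub_mulE // expr2.
Qed.

Lemma schur_qform_le X s x : X^T = X -> 0 < pivot X ->
  qform (schur X) x <= qform X (col_mx s%:M x).
Proof.
move=> sX p0; rewrite qform_col_mx // qform_schur // -subr_ge0.
set p := pivot X; set c := (ursubmx X *m x) 0 0.
have -> : p * s ^+ 2 + 2 * s * c + qform (drsubmx X) x -
    (qform (drsubmx X) x - p^-1 * c ^+ 2) = p^-1 * (p * s + c) ^+ 2.
  by field; rewrite gt_eqF.
by rewrite mulr_ge0 ?sqr_ge0 // invr_ge0 ltW.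
Qed.

Lemma qform_col_mx_schur X x : X^T = X -> pivot X != 0 ->
  qform X (col_mx (- (ursubmx X *m x) 0 0 / pivot X)%:M x) = qform (schur X) x.
Proof. by move=> sX p0; rewrite qform_col_mx // qform_schur //; field. Qed.

Lemma posdef_pivot_gt0 X : X^T = X -> posdef X -> 0 < pivot X.
Proof.
by move=> sX pX; rewrite -qform_pivot // pX // col_mx_eq0 negb_and oner_eq0.
Qed.

Lemma posdef_schur X : X^T = X -> posdef X -> posdef (schur X).
Proof.
move=> sX pX x x0; rewrite -qform_col_mx_schur ?gt_eqF ?posdef_pivot_gt0 //.
by rewrite pX // col_mx_eq0 negb_and x0 orbT.
Qed.

End Schur.

Lemma det_posdef_gt0 n (X : 'M[R]_n) : X^T = X -> posdef X -> 0 < \det X.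
Proof.
elim: n X => [|n IH] X sX pX; first by rewrite det_mx00.
rewrite (@det_schur n X) ?gt_eqF ?posdef_pivot_gt0 //.
rewrite mulr_gt0 ?posdef_pivot_gt0 //.
by apply: IH; [apply: tr_schur | apply: posdef_schur].
Qed.

Lemma posdef_mul_tr m n (B : 'M[R]_(m, n)) : row_free B -> posdef (B *m B^T).
Proof.
move=> fB x x0; rewrite /qform.
have -> : x^T *m (B *m B^T) *m x = (B^T *m x)^T *m (B^T *m x).
  by rewrite trmx_mul trmxK !mulmxA.
rewrite lt_def trmx_mul_self_ge0 trmx_mul_self_eq0 andbT.
rewrite -(inj_eq trmx_inj) trmx_mul trmxK trmx0 mulmx_free_eq0 //.
by rewrite -trmx0 (inj_eq trmx_inj).
Qed.

End QuadraticForm.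

Lemma det_mul_add_scalar (F : fieldType) n r
    (U : 'M[F]_(n, r)) (V : 'M[F]_(r, n)) e : e != 0 -> (r <= n)%N ->
  \det (U *m V + e%:M) = e ^+ (n - r) * \det (V *m U + e%:M).
Proof.
move=> e0 rn; pose K := block_mx 1%:M V (- U) e%:M.
have KUV : K = block_mx 1%:M 0 (- U) 1%:M *m block_mx 1%:M V 0 (U *m V + e%:M).
  rewrite /K mulmx_block ?mul1mx ?mulmx1 ?mul0mx ?mulmx0 ?addr0 ?add0r.
  by rewrite mulNmx addKr.
have KVU : K = block_mx (e^-1 *: (V *m U + e%:M)) V 0 e%:M *m
               block_mx 1%:M 0 (- e^-1 *: U) 1%:M.
  rewrite /K mulmx_block ?mul1mx ?mulmx1 ?mul0mx ?mulmx0 ?addr0 ?add0r.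
  rewrite mul_scalar_mx scalerA mulrN mulfV // scaleN1r -scalemxAr scalerDr.
  by rewrite scale_scalar_mx mulVf // scaleNr addrAC subrr add0r.
have <- : \det K = \det (U *m V + e%:M).
  by rewrite KUV det_mulmx det_lblock det_ublock !det1 !mul1r.
rewrite KVU det_mulmx det_ublock det_lblock !det1 mulr1 detZ det_scalar mulr1.
have -> : e ^+ n = e ^+ (n - r) * e ^+ r by rewrite -exprD subnK.
by rewrite exprVn; field; rewrite expf_neq0.
Qed.

Lemma det_add_scalarE (R : comNzRingType) n (N : 'M[R]_n) x :
  \det (N + x%:M) = (char_poly (- N)).[x].
Proof.
rewrite /char_poly -horner_evalE -det_map_mx; congr (\det _).
apply/matrixP => i j; rewrite !mxE /= horner_evalE !hornerE opprK addrC.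
by rewrite hornerMn hornerX.
Qed.

Lemma lim_det_add_scalar (R : realType) n (N : 'M[R]_n) (f : R -> R) :
  (forall e, e != 0 -> f e = \det (N + e%:M)) -> lim (f @ 0^') = \det N.
Proof.
move=> fE; have -> : \det N = (char_poly (- N)).[0].
  by rewrite -det_add_scalarE raddf0 addr0.
apply: cvg_lim => //.
have p_cvg : horner (char_poly (- N)) @ 0^' --> (char_poly (- N)).[0].
  exact/continuous_withinNx/continuous_horner.
apply: cvg_trans p_cvg; apply: near_eq_cvg; near=> e.
rewrite fE ?det_add_scalarE //; near: e; exact: nbhs_dnbhs_neq.
Unshelve. all: by end_near.
Qed.

Section LogDet.
Variable R : realType.

Lemma ln_concave (a b t : R) : 0 < a -> 0 < b -> 0 <= t <= 1 ->
  t * ln a + (1 - t) * ln b <= ln (t * a + (1 - t) * b).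
Proof.
move=> a0 b0 /andP[t0 t1].
by have := @concave_ln R (Itv01 t0 t1) a b a0 b0; rewrite !convRE.
Qed.

Lemma logdet_concave_le r (X Y Z : 'M[R]_r) t :
  X^T = X -> Y^T = Y -> Z^T = Z -> posdef X -> posdef Y -> 0 <= t <= 1 ->
  (forall x, t * qform X x + (1 - t) * qform Y x <= qform Z x) ->
  t * ln (\det X) + (1 - t) * ln (\det Y) <= ln (\det Z).
Proof.
elim: r X Y Z => [|r IH] X Y Z sX sY sZ pX pY t01 XYZ.
  by rewrite !det_mx00 ln1 !mulr0 addr0.
have /andP[t0 t1] := t01.
have pZ : posdef Z.
  move=> x x0; apply: lt_le_trans (XYZ x).
  by have := pX x x0; have := pY x x0; nra.
have pivX := posdef_pivot_gt0 sX pX; have pivY := posdef_pivot_gt0 sY pY.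
have pivZ := posdef_pivot_gt0 sZ pZ.
have pivXYZ : t * pivot X + (1 - t) * pivot Y <= pivot Z.
  by rewrite -!qform_pivot.
have schurXYZ x :
    t * qform (schur X) x + (1 - t) * qform (schur Y) x <= qform (schur Z) x.
  rewrite -(qform_col_mx_schur _ sZ) ?gt_eqF //; apply: le_trans (XYZ _).
  by rewrite lerD // ler_wpM2l ?subr_ge0 // schur_qform_le.
have dS (W : 'M[R]_(1 + r)) : W^T = W -> posdef W -> 0 < \det (schur W).
  by move=> sW pW; apply: det_posdef_gt0; [apply: tr_schur | apply: posdef_schur].
rewrite !det_schur ?gt_eqF // !lnM ?posrE ?dS // !mulrDr addrACA.
apply: lerD; last exact: IH (tr_schur sX) (tr_schur sY) (tr_schur sZ)
  (posdef_schur sX pX) (posdef_schur sY pY) t01 schurXYZ.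
apply: le_trans (ln_concave pivX pivY t01) _.
by rewrite ler_ln ?posrE //; nra.
Qed.

Lemma logdet_concave r (X Y : 'M[R]_r) t :
  X^T = X -> Y^T = Y -> posdef X -> posdef Y -> 0 <= t <= 1 ->
  t * ln (\det X) + (1 - t) * ln (\det Y) <= ln (\det (t *: X + (1 - t) *: Y)).
Proof.
move=> sX sY pX pY t01; apply: logdet_concave_le => // [|x].
  by rewrite linearD /= !linearZ /= sX sY.
by rewrite qformD !qformZ.
Qed.

End LogDet.

Section Compress.
Variables (R : realType) (n r : nat) (B : 'M[R]_(r, n)).
Hypothesis B_free : row_free B.

Definition compress (A : 'M[R]_n) : 'M[R]_r := (pinvmx B)^T *m A *m pinvmx B.

Lemma compress_comb (A1 A2 : 'M[R]_n) t :
  compress (t *: A1 + (1 - t) *: A2) = t *: compress A1 + (1 - t) *: compress A2.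
Proof. by rewrite /compress mulmxDr mulmxDl -!scalemxAr -!scalemxAl. Qed.

Lemma tr_compress A : A^T = A -> (compress A)^T = compress A.
Proof.
by move=> sA; rewrite /compress trmx_mul (trmx_mul _ A) trmxK sA mulmxA.
Qed.

Lemma qform_compress A x : qform (compress A) x = qform A (pinvmx B *m x).
Proof. by rewrite /qform /compress [(pinvmx B *m x)^T]trmx_mul !mulmxA. Qed.

Lemma compressK A : A^T = A -> (A <= B)%MS -> B^T *m compress A *m B = A.
Proof.
move=> sA sAB; have AK : A *m pinvmx B *m B = A := mulmxKpV sAB.
have KA : B^T *m (pinvmx B)^T *m A = A.
  by apply: trmx_inj; rewrite trmx_mul trmx_mul !trmxK sA mulmxA AK.
by rewrite /compress mulmxA (mulmxA B^T) KA AK.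
Qed.

Lemma compress_unitmx A : A^T = A -> (A <= B)%MS -> \rank A = r ->
  compress A \in unitmx.
Proof.
move=> sA sAB rA; rewrite -row_free_unit /row_free eqn_leq rank_leq_row /=.
have := mxrankM_maxl (B^T *m compress A) B; rewrite compressK // rA.
by move/leq_trans; apply; exact: mxrankM_maxr.
Qed.

Lemma posdef_compress A : A^T = A -> psd A -> (A <= B)%MS -> \rank A = r ->
  posdef (compress A).
Proof.
move=> sA pA sAB rA; apply: psd_unitmx_posdef; first exact: tr_compress.
  by move=> x; rewrite qform_compress; exact: pA.
exact: compress_unitmx.
Qed.

Lemma pdet_compress A : A^T = A -> (A <= B)%MS -> \rank A = r ->
  pdet A = \det (compress A) * \det (B *m B^T).
Proof.
move=> sA sAB rA; rewrite /pdet rA -det_mulmx.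
apply: lim_det_add_scalar => e e0.
have rn : (r <= n)%N by rewrite -(eqP B_free) rank_leq_col.
rewrite -[in LHS](compressK sA sAB) -mulmxA det_mul_add_scalar // -mulmxA.
by rewrite mulrC mulKf // expf_neq0.
Qed.

End Compress.

Section PseudoDet.
Variable R : realType.

Lemma MS_row_base n (S A : 'M[R]_n) : MS S A ->
  [/\ A^T = A, psd A, (A <= row_base S)%MS & \rank A = \rank S].
Proof.
case=> sA [rA pA]; split=> //.
- by rewrite (eq_row_base S) {1}sA; case/andP: rA.
- by rewrite -mxrank_tr; apply: eqmx_rank.
Qed.

Lemma ln_pdet_MS n (S A : 'M[R]_n) : MS S A ->
  ln (pdet A) = ln (\det (compress (row_base S) A)) +
                ln (\det (row_base S *m (row_base S)^T)).
Proof.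
case/MS_row_base => sA pA sAB rA; have fB := row_base_free S.
rewrite (pdet_compress fB) // lnM // posrE; apply: det_posdef_gt0.
- exact: tr_compress.
- exact: posdef_compress.
- by rewrite trmx_mul trmxK.
- exact: posdef_mul_tr.
Qed.

End PseudoDet.

Unset Implicit Arguments.

Theorem lemma3 (R : realType) (n : nat) (S : 'M[R]_n) (C : set 'M[R]_n) :
  C `<=` MS S -> convex_mxset C ->
  concave_on C (fun A => ln (pdet A)).
Proof.
move=> CS convC A1 A2 CA1 CA2 t t01.
have CA := convC _ _ CA1 CA2 t t01.
rewrite /= (ln_pdet_MS (CS _ CA1)) (ln_pdet_MS (CS _ CA2)) (ln_pdet_MS (CS _ CA)).
have [sA1 pA1 A1S rA1] := MS_row_base (CS _ CA1).
have [sA2 pA2 A2S rA2] := MS_row_base (CS _ CA2).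
have := logdet_concave (tr_compress _ sA1) (tr_compress _ sA2)
  (posdef_compress sA1 pA1 A1S rA1) (posdef_compress sA2 pA2 A2S rA2) t01.
rewrite -compress_comb; lra.
Qed.
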